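(* Let $n\ge1$, $w\in\mathbb{R}^n$ with $w\neq0$, and $\lambda>0$. Let $(\alpha^*,b^* )$ be a minimizer of $$\min_{\alpha>0,\; b\in\{-1,0,1\}^n}\; \tfrac12\sum_{i=1}^n \lambda(\alpha b_i - w_i)^2,$$ and set $\Delta^*=\alpha^*/2$. Then the set $S=\{i: |w_i|>\Delta^*\}$ is nonempty, $$\alpha^*=\frac{1}{|S|}\sum_{i\in S}|w_i|,$$ and $\Delta^*$ is a maximizer, over $\Delta\in(0,\max_i|w_i|)$, of $$F(\Delta)=\frac{1}{|\{i:|w_i|>\Delta\}|}\Big(\sum_{i:\,|w_i|>\Delta}|w_i|\Big)^2 .$$ That is, $\alpha^*$ coincides with the ternary-weight-network scaling with threshold $\Delta^*=\alpha^*/2$.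
   Context: This is the case of a layer-wise loss-aware ternarization problem $\min \tfrac12\|\alpha b-w\|_{D}^2$ in which the diagonal curvature matrix is $D=\lambda I$. *)

From mathcomp Require Import all_boot all_order all_algebra.
From mathcomp Require Import reals.
Set Implicit Arguments. Unset Strict Implicit. Unset Printing Implicit Defensive.
Import Order.TTheory GRing.Theory Num.Theory.
Local Open Scope ring_scope.

Section LossAwareTernary.
Variables (R : realType) (n : nat).

Definition ternary (x : R) : bool := [|| x == -1, x == 0 | x == 1].

Definition lat_obj (lam : R) (w : 'rV[R]_n) (a : R) (b : 'rV[R]_n) : R :=
  2^-1 * \sum_(i < n) lam * (a * b ord0 i - w ord0 i) ^+ 2.

Definition is_minimizer (lam : R) (w : 'rV[R]_n) (a : R) (b : 'rV[R]_n) : Prop :=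
  [/\ 0 < a, (forall i, ternary (b ord0 i)) &
      forall (a' : R) (b' : 'rV[R]_n), 0 < a' -> (forall i, ternary (b' ord0 i)) ->
        lat_obj lam w a b <= lat_obj lam w a' b'].

Definition supp (w : 'rV[R]_n) (D : R) : {set 'I_n} := [set i | D < `|w ord0 i|].

Definition twn_F (w : 'rV[R]_n) (D : R) : R :=
  (\sum_(i in supp w D) `|w ord0 i|) ^+ 2 / (#|supp w D|)%:R.

Definition maxabs (w : 'rV[R]_n) : R := \big[Num.max/0]_(i < n) `|w ord0 i|.

End LossAwareTernary.

(** For a fixed scale [a] the objective separates over coordinates, and the
    best ternary entry is [sg w_i] when [|w_i| > a/2] and [0] otherwise.
    With [b] the sign pattern of [w] on a support [T], the objective equals
    [lam/2 (sum_i w_i^2 - G(a, T))] with gain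
    [G(a, T) = 2 a s_T - k_T a^2 = s_T^2/k_T - k_T (a - s_T/k_T)^2],
    where [s_T] and [k_T] are the sum of the [|w_i|] over [T] and the size of [T].
    Hence a minimizer [(astar, bstar)] maximizes [G] over all scales and supports
    of nonzero entries, at [Tstar = supp w (astar/2)]: comparing with a single
    nonzero coordinate shows that [Tstar] is nonempty, comparing with the mean
    [s_Tstar/k_Tstar] on [Tstar] forces [astar] to be that mean, so that
    [G(astar, Tstar) = F(astar/2)], and comparing with the mean on [T = supp w D]
    gives [F(D) <= F(astar/2)]. *)
From mathcomp Require Import all_boot all_order all_algebra.
From mathcomp Require Import reals.
From mathcomp Require Import ring lra.
Import Order.TTheory GRing.Theory Num.Theory.
Local Open Scope ring_scope.
Set Implicit Arguments. Unset Strict Implicit. Unset Printing Implicit Defensive.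

Lemma threshold_sign_sqr_le (R : realType) (a x y : R) : 0 < a -> ternary y ->
  (a * (if a / 2 < `|x| then Num.sg x else 0) - x) ^+ 2 <= (a * y - x) ^+ 2.
Proof.
move=> a0 /or3P ty.
have xle : x <= `|x| by rewrite ler_norm.
have Nxle : - x <= `|x| by rewrite -normrN ler_norm.
case: ifP => [lt | /negbT]; last first.
  by rewrite -leNgt mulr0 sub0r sqrrN => le; case: ty => /eqP->; nra.
have x0 : x != 0 by rewrite -normr_gt0; lra.
have -> : (a * Num.sg x - x) ^+ 2 = a ^+ 2 - 2 * a * `|x| + x ^+ 2.
  rewrite normrEsg.
  transitivity (a ^+ 2 * Num.sg x ^+ 2 - 2 * a * (Num.sg x * x) + x ^+ 2); first by ring.
  by rewrite sqr_sg x0 mulr1.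
by case: ty => /eqP->; nra.
Qed.

Section TernarySign.
Variables (R : realType) (n : nat) (w : 'rV[R]_n).

Definition tern_sign (T : {set 'I_n}) : 'rV[R]_n :=
  \row_i (if i \in T then Num.sg (w ord0 i) else 0).

Definition abs_sum (T : {set 'I_n}) : R := \sum_(i in T) `|w ord0 i|.

Definition abs_mean (T : {set 'I_n}) : R := abs_sum T / #|T|%:R.

Definition gain (a : R) (T : {set 'I_n}) : R := 2 * a * abs_sum T - #|T|%:R * a ^+ 2.

Lemma ternary_tern_sign (T : {set 'I_n}) (i : 'I_n) : ternary (tern_sign T ord0 i).
Proof.
rewrite /ternary mxE; case: (i \in T); last by rewrite eqxx orbT.
by case: sgrP; rewrite eqxx ?orbT.
Qed.

Lemma lat_obj_threshold_le (lam a : R) (b : 'rV[R]_n) : 0 <= lam -> 0 < a ->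
    (forall i, ternary (b ord0 i)) ->
  lat_obj lam w a (tern_sign (supp w (a / 2))) <= lat_obj lam w a b.
Proof.
move=> lam0 a0 tb; rewrite /lat_obj ler_wpM2l ?invr_ge0 ?ler0n //.
apply: ler_sum => i _; rewrite ler_wpM2l // mxE inE.
exact: threshold_sign_sqr_le.
Qed.

Lemma lat_obj_tern_sign (lam a : R) (T : {set 'I_n}) :
    {in T, forall i, w ord0 i != 0} ->
  lat_obj lam w a (tern_sign T) =
    2^-1 * (\sum_i lam * w ord0 i ^+ 2 - lam * gain a T).
Proof.
move=> wT; rewrite /lat_obj /gain /abs_sum; congr (_ * _).
have termE i : lam * (a * tern_sign T ord0 i - w ord0 i) ^+ 2 =
    lam * w ord0 i ^+ 2 - (if i \in T then lam * (2 * a * `|w ord0 i| - a ^+ 2) else 0).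
  rewrite mxE; case: ifP => iT; last by rewrite mulr0 add0r sqrrN subr0.
  rewrite normrEsg; transitivity (lam * w ord0 i ^+ 2 - lam * (2 * a *
    (Num.sg (w ord0 i) * w ord0 i) - a ^+ 2 * Num.sg (w ord0 i) ^+ 2)); first by ring.
  by rewrite sqr_sg wT // mulr1.
under eq_bigr => i _ do rewrite termE.
rewrite sumrB; congr (_ - _).
rewrite -big_mkcond /= -mulr_sumr sumrB -mulr_sumr sumr_const.
by rewrite -[a ^+ 2 *+ #|T|]mulr_natl.
Qed.

Lemma gainE (a : R) (T : {set 'I_n}) : T != set0 ->
  gain a T = abs_sum T ^+ 2 / #|T|%:R - #|T|%:R * (a - abs_mean T) ^+ 2.
Proof. by rewrite -card_gt0 /gain /abs_mean => T0; field; rewrite pnatr_eq0 -lt0n. Qed.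

Lemma gain_abs_mean (T : {set 'I_n}) : T != set0 ->
  gain (abs_mean T) T = abs_sum T ^+ 2 / #|T|%:R.
Proof. by move=> T0; rewrite gainE // subrr expr0n mulr0 subr0. Qed.

Lemma abs_mean_gt0 (T : {set 'I_n}) :
  {in T, forall i, w ord0 i != 0} -> T != set0 -> 0 < abs_mean T.
Proof.
move=> wT T0; rewrite divr_gt0 ?ltr0n ?card_gt0 //.
case/set0Pn: T0 => i iT; rewrite /abs_sum (bigD1 i) //=.
by rewrite ltr_pwDl ?normr_gt0 ?wT // sumr_ge0.
Qed.

Lemma supp_nonzero (D : R) : 0 <= D -> {in supp w D, forall i, w ord0 i != 0}.
Proof. by move=> D0 i; rewrite inE -normr_gt0; apply: le_lt_trans. Qed.

Lemma twn_F_gain (D : R) : supp w D != set0 ->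
  twn_F w D = gain (abs_mean (supp w D)) (supp w D).
Proof. by move=> TD; rewrite gain_abs_mean. Qed.

Lemma lt_maxabs (D : R) (i : 'I_n) : i \in supp w D -> D < maxabs w.
Proof.
rewrite inE => lt; apply: (lt_le_trans lt).
exact: (le_bigmax _ (fun i => `|w ord0 i|) i).
Qed.

Lemma supp_neq0 (D : R) : 0 <= D -> D < maxabs w -> supp w D != set0.
Proof.
move=> D0; apply: contraTneq => TD; rewrite -leNgt.
apply: bigmax_le => // i _; rewrite leNgt; apply: contraFN (in_set0 i) => lt.
by rewrite -TD inE.
Qed.

End TernarySign.

Section Minimizer.
Variables (R : realType) (n : nat) (w : 'rV[R]_n) (lam astar : R) (bstar : 'rV[R]_n).
Hypotheses (lam_gt0 : 0 < lam) (min_astar : is_minimizer lam w astar bstar).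

Let Tstar := supp w (astar / 2).

Lemma minimizer_supp_nonzero : {in Tstar, forall i, w ord0 i != 0}.
Proof.
by case: min_astar => astar_gt0 _ _; apply: supp_nonzero; rewrite divr_ge0 ?ltW.
Qed.

Lemma minimizer_gain_max (a : R) (T : {set 'I_n}) :
  0 < a -> {in T, forall i, w ord0 i != 0} -> gain w a T <= gain w astar Tstar.
Proof.
case: min_astar => astar_gt0 tern_bstar le_astar a_gt0 wT.
have := le_trans (lat_obj_threshold_le w (ltW lam_gt0) astar_gt0 tern_bstar)
  (le_astar a (tern_sign w T) a_gt0 (ternary_tern_sign w T)).
rewrite !lat_obj_tern_sign //; last exact: minimizer_supp_nonzero.
by rewrite ler_pM2l ?invr_gt0 ?ltr0n // lerD2l lerN2 ler_pM2l.
Qed.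

Lemma minimizer_supp_neq0 : w != 0 -> Tstar != set0.
Proof.
move=> w0; have [j wj] : exists j, w ord0 j != 0.
  apply/existsP; apply: contraR w0; rewrite negb_exists => /forallP w0.
  by apply/eqP/rowP => j; rewrite mxE; apply/eqP; rewrite -[_ == _]negbK w0.
have wj_gt0 : 0 < `|w ord0 j| by rewrite normr_gt0.
have gain_j : gain w `|w ord0 j| [set j] = `|w ord0 j| ^+ 2.
  by rewrite /gain /abs_sum big_set1 cards1; ring.
have wj_nz : {in [set j], forall i, w ord0 i != 0}.
  by move=> i; rewrite inE => /eqP->.
apply: contraTneq (minimizer_gain_max wj_gt0 wj_nz) => Tstar0.
rewrite gain_j Tstar0 /gain /abs_sum big_set0 cards0 -ltNge.
by rewrite mulr0 mul0r subr0 exprn_gt0.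
Qed.

Lemma minimizer_abs_mean : w != 0 -> astar = abs_mean w Tstar.
Proof.
move=> w0; have Tstar0 := minimizer_supp_neq0 w0.
have := minimizer_gain_max (abs_mean_gt0 minimizer_supp_nonzero Tstar0)
  minimizer_supp_nonzero.
rewrite gain_abs_mean // [X in _ <= X]gainE // lerBrDr gerDl.
rewrite pmulr_rle0 ?ltr0n ?card_gt0 // => le0.
by apply/eqP; rewrite -subr_eq0 -sqrf_eq0 eq_le le0 sqr_ge0.
Qed.

End Minimizer.

Theorem corollary1 (R : realType) (n : nat) (w : 'rV[R]_n) (lam : R)
    (astar : R) (bstar : 'rV[R]_n) :
  (0 < n)%N -> w != 0 -> 0 < lam ->
  is_minimizer lam w astar bstar ->
  [/\ supp w (astar / 2) != set0,
      astar = (\sum_(i in supp w (astar / 2)) `|w ord0 i|) / (#|supp w (astar / 2)|)%:R,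
      0 < astar / 2 < maxabs w &
      forall D : R, 0 < D < maxabs w -> twn_F w D <= twn_F w (astar / 2)].
Proof.
move=> _ w0 lam0 min_astar. (* [0 < n] already follows from [w != 0]. *)
have Tstar0 := minimizer_supp_neq0 lam0 min_astar w0.
have astar_mean := minimizer_abs_mean lam0 min_astar w0.
have [astar0 _ _] := min_astar.
have supp_pos D : 0 < D -> {in supp w D, forall i, w ord0 i != 0}.
  by move=> D0; apply: supp_nonzero; exact: ltW.
split => //.
  rewrite divr_gt0 //=; case/set0Pn: Tstar0 => i; exact: lt_maxabs.
move=> D /andP [D0 Dmax]; have TD := supp_neq0 (ltW D0) Dmax.
rewrite !twn_F_gain // -astar_mean.
exact: minimizer_gain_max lam0 min_astar _ _ (abs_mean_gt0 (supp_pos D D0) TD)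
  (supp_pos D D0).
Qed.
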